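(* Let $G$ be a finite, simple, connected graph of order $n\ge 3$. Then $res_{wt}(G)=n$ if and only if $G$ contains a twin (i.e. some vertex of $G$ is a twin).
   Context: $d(x,y)$ is the shortest-path distance and $N(x)$ the set of neighbors of $x$. A set $W\subseteq V(G)$ is a resolving set if for every two distinct vertices $y,z$ there is $x\in W$ with $d(y,x)\ne d(z,x)$. A set $W$ is a weak total resolving set (WTR-set) if $W$ is resolving and, for every $w\in W$ and every $x\in V(G)\setminus W$, there is $w'\in W\setminus\{w\}$ with $d(x,w')\ne d(w,w')$. The weak total resolving number $res_{wt}(G)$ is the minimum positive integer $r$ such that every set of $r$ vertices of $G$ is a WTR-set for $G$. Two distinct vertices $u,v$ are twins if $N(u)\setminus\{v\}=N(v)\setminus\{u\}$; a vertex $u$ is a twin if there exists $v\ne u$ such that $u,v$ are twins. *)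

From mathcomp Require Import all_boot.
Set Implicit Arguments. Unset Strict Implicit. Unset Printing Implicit Defensive.

Section Graph.
Variables (T : finType) (e : rel T).

Definition walk_len (k : nat) (x y : T) : bool :=
  [exists p : k.-tuple T, path e x p && (last x p == y)].

(* shortest-path distance d(x,y): least k with a walk of length k from x to y
   (a shortest walk is a path of length < #|T|); in a connected graph this
   is always found.  Unreachable pairs get #|T| (irrelevant here). *)
Definition dist (x y : T) : nat :=
  find (fun k => walk_len k x y) (iota 0 #|T|).

Definition nbhd (x : T) : {set T} := [set y | e x y].

Definition connected_graph : Prop := forall x y : T, connect e x y.

Definition resolving (W : {set T}) : bool :=
  [forall y, forall z, (y != z) ==> [exists x in W, dist y x != dist z x]].

Definition wtr_set (W : {set T}) : bool :=
  resolving W &&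
  [forall w in W, forall x in ~: W,
     [exists w' in W :\ w, dist x w' != dist w w']].

Definition res_wt_ok (r : nat) : bool :=
  (0 < r) && [forall W : {set T}, (#|W| == r) ==> wtr_set W].

Lemma res_wt_ok_ex : exists r, res_wt_ok r.
Proof.
exists #|T|.+1; rewrite /res_wt_ok /=; apply/forallP => W; apply/implyP.
by move/eqP=> HW; have := max_card W; rewrite HW ltnn.
Qed.

Definition res_wt : nat := ex_minn res_wt_ok_ex.

Definition twins (u v : T) : bool :=
  (u != v) && (nbhd u :\ v == nbhd v :\ u).

Definition is_twin (u : T) : bool := [exists v, twins u v].

End Graph.

(* The full vertex set is always a WTR-set, so res_wt <= n.  Twins u, v have
   the same distance to every other vertex, hence no set avoiding both is
   resolving, and the weak total condition fails for w = v, x = u in the set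
   V \ {u}; thus no r < n works.  Conversely, if V \ {a} fails the weak total
   condition at some w, then a and w have the same distance to every other
   vertex, in particular the same neighbours, so they are twins; without
   twins every (n-1)-set is a WTR-set. *)
From mathcomp Require Import all_boot zify.
Set Implicit Arguments. Unset Strict Implicit. Unset Printing Implicit Defensive.

Section Distance.
Variables (T : finType) (e : rel T).

Lemma walk_lenP k x y :
  reflect (exists p : seq T, [/\ size p = k, path e x p & last x p = y])
          (walk_len e k x y).
Proof.
apply: (iffP existsP) => [[p /andP[walk_p /eqP last_p]]|[p [size_p walk_p last_p]]].
  by exists p; split => //; rewrite size_tuple.
have size_pk : size p == k by rewrite size_p.
by exists (Tuple size_pk) => /=; rewrite walk_p last_p eqxx.
Qed.

Lemma walk_len0 x y : walk_len e 0 x y = (x == y).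
Proof. by apply/walk_lenP/eqP => [[[|a p] [_ _ <-]]|->] //; exists [::]. Qed.

Lemma walk_len1 x y : walk_len e 1 x y = e x y.
Proof.
apply/walk_lenP/idP => [[[|a [|b p]] [//= _]]|exy].
  by rewrite andbT => ea <-.
by exists [:: y]; rewrite /= exy.
Qed.

Lemma dist_le_card x y : dist e x y <= #|T|.
Proof. by rewrite /dist -[X in _ <= X](size_iota 0) find_size. Qed.

Lemma dist_walk x y : dist e x y < #|T| -> walk_len e (dist e x y) x y.
Proof.
move=> lt_d; have has_walk : has (fun k => walk_len e k x y) (iota 0 #|T|).
  by rewrite has_find size_iota.
by have := nth_find 0 has_walk; rewrite nth_iota.
Qed.

Lemma dist_min k x y : k < #|T| -> walk_len e k x y -> dist e x y <= k.
Proof.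
move=> lt_k wk; rewrite leqNgt; apply/negP => /(before_find 0).
by rewrite nth_iota // wk.
Qed.

Lemma dist_eq0 x y : 0 < #|T| -> (dist e x y == 0) = (x == y).
Proof. by rewrite /dist; case: #|T| => //= m _; rewrite walk_len0; case: (x == y). Qed.

Lemma dist_eq1 x y : irreflexive e -> 1 < #|T| -> (dist e x y == 1) = e x y.
Proof.
move=> irr; rewrite /dist; case: #|T| => [|[|m]] //= _.
rewrite walk_len0 walk_len1; have [->|_] := eqVneq x y; first by rewrite irr.
by case: (e x y).
Qed.

Lemma dist_self_neq y z : y != z -> dist e y y != dist e z y.
Proof.
have n_gt0 : 0 < #|T| by apply/card_gt0P; exists y.
move=> neq_yz; apply: contra neq_yz => /eqP dyz.
by rewrite eq_sym -(dist_eq0 z y) // -dyz dist_eq0.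
Qed.

(* A walk from u starting with the edge uv shortens to a walk from v;
   any other walk from u can start from v instead. *)
Lemma walk_len_shift u v k x :
    (forall y, y != v -> e u y -> e v y) -> x != u -> walk_len e k u x ->
  exists2 j, j <= k & walk_len e j v x.
Proof.
move=> Nuv neq_xu /walk_lenP[p [<- walk_p last_p]]; move: neq_xu.
rewrite -last_p; case: p walk_p {last_p} => [|a p] /=; first by rewrite eqxx.
case/andP=> e_ua walk_p _; have [eq_av|neq_av] := eqVneq a v.
  by exists (size p) => //; apply/walk_lenP; exists p; rewrite -eq_av.
by exists (size p).+1 => //; apply/walk_lenP; exists (a :: p); rewrite /= Nuv.
Qed.

Lemma dist_shift_le u v x :
  (forall y, y != v -> e u y -> e v y) -> x != u -> dist e v x <= dist e u x.
Proof.
move=> Nuv neq_xu; have [lt_d|ge_d] := ltnP (dist e u x) #|T|.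
  have [j le_j wj] := walk_len_shift Nuv neq_xu (dist_walk lt_d).
  exact: leq_trans (dist_min (leq_ltn_trans le_j lt_d) wj) le_j.
exact: leq_trans (dist_le_card v x) ge_d.
Qed.

Lemma twins_sym u v : twins e u v -> twins e v u.
Proof. by case/andP => neq_uv /eqP N_uv; rewrite /twins N_uv eqxx andbT eq_sym. Qed.

Lemma twins_nbhd u v : twins e u v -> forall y, y != v -> e u y -> e v y.
Proof.
case/andP => _ /eqP N_uv y neq_yv e_uy.
have : y \in nbhd e u :\ v by rewrite !inE neq_yv e_uy.
by rewrite N_uv !inE => /andP[].
Qed.

Lemma twins_dist u v x :
  twins e u v -> x != u -> x != v -> dist e u x = dist e v x.
Proof.
move=> tw_uv neq_xu neq_xv; apply/eqP; rewrite eqn_leq.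
by rewrite !dist_shift_le //; apply: twins_nbhd => //; apply: twins_sym.
Qed.

Lemma twins_of_dist u v :
    irreflexive e -> 1 < #|T| -> u != v ->
    (forall y, y != u -> y != v -> dist e u y = dist e v y) ->
  twins e u v.
Proof.
move=> irr n_gt1 neq_uv duv; rewrite /twins neq_uv; apply/eqP/setP => y.
rewrite !inE; have [->|neq_yu] := eqVneq y u; first by rewrite irr andbF.
have [->|neq_yv] := eqVneq y v; first by rewrite irr andbF.
by rewrite -!dist_eq1 // duv.
Qed.

End Distance.

Section WeakTotalResolving.
Variables (T : finType) (e : rel T).

Lemma resolving_cardC W : #|~: W| <= 1 -> resolving e W.
Proof.
move=> cardC; apply/forallP => y; apply/forallP => z; apply/implyP => neq_yz.
have [Wy|W'y] := boolP (y \in W).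
  by apply/existsP; exists y; rewrite Wy dist_self_neq.
have Wz : z \in W.
  apply: contraTT cardC => W'z; rewrite -ltnNge; apply/card_gt1P.
  by exists y, z; rewrite !inE W'y W'z.
by apply/existsP; exists z; rewrite Wz eq_sym dist_self_neq // eq_sym.
Qed.

Lemma wtr_setT : wtr_set e [set: T].
Proof.
rewrite /wtr_set resolving_cardC ?setCT ?cards0 //=.
by apply/forall_inP => w _; apply/forall_inP => x; rewrite !inE.
Qed.

Lemma twins_not_resolving u v (W : {set T}) :
  twins e u v -> u \notin W -> v \notin W -> ~~ resolving e W.
Proof.
move=> tw_uv W'u W'v; apply/negP => /forallP/(_ u)/forallP/(_ v).
case/andP: (tw_uv) => -> _ /= /exists_inP[x Wx].
have neq_xu : x != u by apply: contraNneq W'u => <-.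
have neq_xv : x != v by apply: contraNneq W'v => <-.
by rewrite (twins_dist tw_uv) // eqxx.
Qed.

Lemma twins_not_wtr_setC1 u v : twins e u v -> ~~ wtr_set e [set~ u].
Proof.
move=> tw_uv; case/andP: (tw_uv) => neq_uv _.
apply/negP => /andP[_ /forall_inP/(_ v)]; rewrite !inE eq_sym neq_uv.
move=> /(_ isT)/forall_inP/(_ u); rewrite !inE eqxx => /(_ isT).
case/exists_inP => w; rewrite !inE => /andP[neq_wv neq_wu].
by rewrite (twins_dist tw_uv) ?eqxx.
Qed.

Lemma wtr_setC1 a :
  irreflexive e -> 1 < #|T| -> ~~ is_twin e a -> wtr_set e [set~ a].
Proof.
move=> irr n_gt1 notwin; rewrite /wtr_set resolving_cardC ?setCK ?cards1 //=.
apply/forall_inP => w; rewrite !inE => neq_wa; apply/forall_inP => x.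
rewrite inE => /eqP->; apply: contraNT notwin.
rewrite negb_exists_in => /forall_inP d_aw; apply/existsP; exists w.
apply: twins_of_dist; rewrite // 1?eq_sym // => y neq_ya neq_yw.
by apply/eqP; rewrite -[_ == _]negbK d_aw // !inE neq_yw neq_ya.
Qed.

Lemma res_wt_okP : res_wt_ok e (res_wt e).
Proof. by rewrite /res_wt; case: ex_minnP. Qed.

Lemma res_wt_min r : res_wt_ok e r -> res_wt e <= r.
Proof. by rewrite /res_wt; case: ex_minnP => m _; apply. Qed.

Lemma res_wt_ok_card : 0 < #|T| -> res_wt_ok e #|T|.
Proof.
move=> n_gt0; rewrite /res_wt_ok n_gt0; apply/forall_inP => W /eqP cardW.
suff -> : W = [set: T] by apply: wtr_setT.
by apply/eqP; rewrite eqEcard subsetT cardsT cardW leqnn.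
Qed.

Lemma res_wt_ok_pred_card :
  irreflexive e -> 1 < #|T| -> ~~ [exists a, is_twin e a] -> res_wt_ok e #|T|.-1.
Proof.
move=> irr n_gt1 notwin; rewrite /res_wt_ok -ltnS prednK ?n_gt1 ?(ltnW n_gt1) //.
apply/forall_inP => W /eqP cardW.
have /cards1P[a W'a] : #|~: W| == 1.
  by move: (cardsC W); rewrite cardW; lia.
rewrite -[W]setCK W'a wtr_setC1 //.
by apply: contra notwin => twa; apply/existsP; exists a.
Qed.

Lemma twins_not_res_wt_ok u v r :
  twins e u v -> r < #|T| -> ~~ res_wt_ok e r.
Proof.
move=> tw_uv lt_r; rewrite /res_wt_ok negb_and -leqNgt leqn0 negb_forall.
case: (eqVneq r 0) => [//|nz_r]; apply/orP; right.
case/andP: (tw_uv) => neq_uv _.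
have [eq_r|neq_r] := eqVneq r #|T|.-1.
  apply/existsP; exists [set~ u]; rewrite negb_imply cardsC1 eq_r eqxx.
  exact: twins_not_wtr_setC1 tw_uv.
have : r <= #|~: [set u; v]| by rewrite cardsCs setCK cards2 neq_uv; lia.
case/card_geqP => s [uniq_s size_s sub_s]; apply/existsP; exists [set x in s].
rewrite negb_imply cardsE (card_uniqP uniq_s) size_s eqxx /wtr_set negb_and.
apply/orP; left; apply: (twins_not_resolving tw_uv); rewrite inE.
  by apply/negP => /sub_s; rewrite !inE eqxx.
by apply/negP => /sub_s; rewrite !inE eqxx orbT.
Qed.

End WeakTotalResolving.

Theorem theorem5 (T : finType) (e : rel T) :
  symmetric e -> irreflexive e -> connected_graph e -> 3 <= #|T| ->
  (res_wt e = #|T| <-> exists u : T, is_twin e u).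
Proof.
move=> _ irr _ n_ge3; have n_gt1 : 1 < #|T| by apply: ltnW.
have le_res_n := res_wt_min (res_wt_ok_card e (ltnW n_gt1)).
split => [eq_res_n|[u /existsP[v tw_uv]]].
  apply/existsP; apply: contraT => notwin.
  have := res_wt_min (res_wt_ok_pred_card irr n_gt1 notwin).
  by rewrite eq_res_n; lia.
apply/eqP; rewrite eqn_leq le_res_n leqNgt; apply: contraL (res_wt_okP e).
exact: twins_not_res_wt_ok tw_uv.
Qed.
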